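(* Let $l\ge2$ be even and let $a,b\in\{1,\dots,l-1\}$ be such that $X=X(\mathbb{Z}_{2l},\{\pm a,\pm b\})$ is a connected $4$-regular circulant graph with $a+b\ne l$. Then $X$ does not admit perfect state transfer between (distinct) vertex type states.
   Context: $X(\mathbb{Z}_n,S)$ (with $S\subseteq\mathbb{Z}_n\setminus\{0\}$, $S=-S$) has vertex set $\mathbb{Z}_n$ and edges $\{x,y\}$ with $y-x\in S$. For a graph with symmetric arc set $\mathcal{A}$ ($t((x,y))=y$, $(x,y)^{-1}=(y,x)$): boundary matrix $d_{x,a}=\frac{1}{\sqrt{\deg x}}\delta_{x,t(a)}$, shift matrix $R_{a,b}=\delta_{a,b^{-1}}$, $U=R(2d^*d-I_{\mathcal{A}})$. Perfect state transfer between vertex type states means $U^\tau d^*e_x=\gamma d^*e_y$ for some distinct vertices $x,y$, some $\tau\in\mathbb{Z}_{\ge1}$ and some $|\gamma|=1$ ($e_x$ the standard unit vector). *)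

From mathcomp Require Import all_boot all_order all_algebra all_field.
Set Implicit Arguments. Unset Strict Implicit. Unset Printing Implicit Defensive.
Import Order.TTheory GRing.Theory Num.Theory.
Local Open Scope ring_scope.

(* Circulant graph X(Z_n, S): vertices 'I_n (residues mod n),
   x ~ y iff (y - x) mod n lies in S (S given as a list of residues). *)
Definition circ_adj (n : nat) (S : seq nat) : rel 'I_n :=
  fun x y => ((y + n - x) %% n)%N \in S.
Arguments circ_adj n S x y : clear implicits.

Section Walk.
Variables (V : finType) (adj : rel V).

Definition arc := {p : V * V | adj p.1 p.2}.

Definition deg (x : V) : nat := #|[pred y | adj x y]|.

Definition connected_graph : Prop := forall x y : V, connect adj x y.

Definition regular (k : nat) : Prop := forall x : V, deg x = k.

Definition terminus (e : arc) : V := (val e).2.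

Definition bdry (x : V) (e : arc) : algC :=
  (sqrtC (deg x)%:R)^-1 * (x == terminus e)%:R.

Definition bdry_adj (e : arc) (x : V) : algC := (bdry x e)^*.

Definition shift (e f : arc) : algC :=
  (val e == ((val f).2, (val f).1))%:R.

Definition coin (e f : arc) : algC :=
  2 * (\sum_(x : V) bdry_adj e x * bdry x f) - (e == f)%:R.

Definition walkU (e f : arc) : algC := \sum_(g : arc) shift e g * coin g f.

Definition applyU (v : arc -> algC) : arc -> algC :=
  fun e => \sum_(f : arc) walkU e f * v f.

Definition vertex_state (x : V) : arc -> algC := fun e => bdry_adj e x.

Definition PST_vertex : Prop :=
  exists (x y : V) (tau : nat) (gamma : algC),
    [/\ x != y, (0 < tau)%N, `|gamma| = 1 &
        forall e : arc, iter tau applyU (vertex_state x) e = gamma * vertex_state y e].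
End Walk.

From Pilot Require Import Defs.
From mathcomp Require Import all_boot all_order all_algebra all_field.
From mathcomp Require Import ring zify.
Set Implicit Arguments. Unset Strict Implicit. Unset Printing Implicit Defensive.
Import Order.TTheory GRing.Theory Num.Theory.
Local Open Scope ring_scope.

(* Let A be the adjacency matrix of a k-regular graph and p_t the vector of sums, over the
   arcs entering each vertex, of U^t d^* e_x. Then p_(t+2) = (2/k) A p_(t+1) - p_t, so for
   an eigenvector chi of A with eigenvalue mu, <p_t, chi> = sqrt k T_t(mu/k) chi(x), where
   T_t are the Chebyshev polynomials. On X(Z_n, S) the characters z |-> w^z are such
   eigenvectors, with the real eigenvalue mu = sum_(s in S) w^s, so perfect state transfer
   at time tau forces T_tau(mu/4)^2 = 1. Writing 2 (mu/4) = z + 1/z, z is then a root of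
   unity, hence mu/2 is an algebraic integer.
   For w of order 2l, w^a mu / 2 = (1 + w^(a+b)) (1 + w^(a-b)) / 2. For a root of unity
   v <> 1, 1 - v divides an odd integer unless v has order 2^(k+1), in which case
   (1 - v)^(2^k) divides 2; comparing 2-adic valuations, (1 - v1) (1 - v2) / 2 is
   integral only if some v_i = +-1 or v1^2 = v2^2 = -1, which a <> b (forced by
   4-regularity) and a + b <> l exclude. *)

Lemma prim_expr_half (R : idomainType) (l : nat) (w : R) :
  (2 * l).-primitive_root w -> w ^+ l = -1.
Proof.
move=> w_prim; have l_gt0 : (0 < l)%N by have := prim_order_gt0 w_prim; rewrite muln_gt0.
have : (w ^+ l - 1) * (w ^+ l + 1) == 0.
  by rewrite -subr_sqr -exprM mulnC (prim_expr_order w_prim) expr1n subrr.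
rewrite mulf_eq0 subr_eq0 addr_eq0 -(prim_order_dvd w_prim) gtnNdvd //; last lia.
by move/eqP.
Qed.

Lemma norm_unity_root (n : nat) (w : algC) : (0 < n)%N -> w ^+ n = 1 -> `|w| = 1.
Proof.
move=> n_gt0 wn; apply/eqP; rewrite -(pexpr_eq1 n_gt0) ?normr_ge0 //.
by rewrite -normrX wn normr1.
Qed.

Lemma conjC_unity_expr (n i : nat) (w : algC) :
  (0 < n)%N -> w ^+ n = 1 -> (i <= n)%N -> (w ^+ i)^* = w ^+ (n - i).
Proof.
move=> n_gt0 wn i_le.
have <- : (w ^+ i)^-1 = (w ^+ i)^*.
  by rewrite invC_norm normrX (norm_unity_root n_gt0 wn) !expr1n invr1 mul1r.
by apply: mulr1_eq; rewrite -exprD subnKC.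
Qed.

Lemma geometric_div_Aint (z : algC) (r : nat) :
  z \in Aint -> (1 - z ^+ r) / (1 - z) \in Aint.
Proof.
move=> zA; have [->|z_neq1] := eqVneq z 1; first by rewrite subrr invr0 mulr0.
have -> : 1 - z ^+ r = (1 - z) * \sum_(i < r) z ^+ i.
  by rewrite -[1 - z ^+ r]opprB subrX1 -mulNr opprB.
rewrite mulrC mulrA mulVf ?mul1r ?subr_eq0 1?eq_sym //.
by rewrite rpred_sum // => i _; rewrite rpredX.
Qed.

Lemma natr_div_1subr_Aint (u : algC) (m : nat) :
  u \in Aint -> u ^+ m = 1 -> u != 1 -> m%:R / (1 - u) \in Aint.
Proof.
move=> uA um u_neq1; have u1 : 1 - u != 0 by rewrite subr_eq0 eq_sym.
have weighted j : (1 - u) * \sum_(i < j) i.+1%:R * u ^+ i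
                  = \sum_(i < j) u ^+ i - j%:R * u ^+ j.
  elim: j => [|j IH]; first by rewrite !big_ord0 mulr0 mul0r subr0.
  rewrite !big_ord_recr /= mulrDr IH exprS -[j.+1%:R]natr1; ring.
have geo0 : \sum_(i < m) u ^+ i = 0.
  apply: (mulfI (_ : u - 1 != 0)); first by rewrite subr_eq0.
  by rewrite mulr0 -subrX1 um subrr.
have -> : m%:R / (1 - u) = - \sum_(i < m) i.+1%:R * u ^+ i.
  by apply: (mulfI u1); rewrite mulrN weighted geo0 um mulr1 sub0r opprK mulrC divfK.
rewrite rpredN; apply: rpred_sum => i _.
by rewrite rpredM ?rpredX // Aint_Cnat ?natr_nat.
Qed.

Lemma exists_expr2n_eqN1 (R : idomainType) (v : R) (e : nat) :
  v ^+ (2 ^ e) = 1 -> v != 1 -> exists k, v ^+ (2 ^ k) = -1.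
Proof.
elim: e v => [|e IH] v ve v_neq1.
  by move: ve; rewrite expn0 expr1 => v1; rewrite v1 eqxx in v_neq1.
have [ve1|ve1] := eqVneq (v ^+ (2 ^ e)) 1; first exact: IH.
exists e; apply/eqP; rewrite -addr_eq0.
have : (v ^+ (2 ^ e) - 1) * (v ^+ (2 ^ e) + 1) == 0.
  by rewrite -subr_sqr -exprM -expnSr ve expr1n subrr.
by rewrite mulf_eq0 subr_eq0 (negbTE ve1).
Qed.

(* By induction through z^2, since (1 + z) / (1 - z) = (1 - z^(2^(k+1) + 1)) / (1 - z)
   is integral. *)
Lemma two_div_1subr_pow2_Aint (z : algC) (k : nat) :
  z ^+ (2 ^ k) = -1 -> 2 / (1 - z) ^+ (2 ^ k) \in Aint.
Proof.
have N1_neq1 : (-1 : algC) != 1 by rewrite eq_sym -addr_eq0 -[1 + 1]/2 pnatr_eq0.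
elim: k z => [|k IH] z zk.
  by rewrite expn0 expr1 in zk *; rewrite zk opprK divff ?pnatr_eq0.
have zA : z \in Aint.
  apply: (@Aint_unity_root (2 ^ k.+2)); rewrite ?expn_gt0 // unity_rootE.
  by rewrite expnSr exprM zk sqrrN expr1n.
have z_neq1 : 1 - z != 0.
  by rewrite subr_eq0; apply: contra_neq N1_neq1 => z1; rewrite -zk -z1 expr1n.
have z_neqN1 : 1 + z != 0.
  rewrite addrC addr_eq0; apply: contra_neq N1_neq1 => zN1.
  by rewrite -zk zN1 expnS exprM sqrrN !expr1n.
have ratio : (1 + z) / (1 - z) \in Aint.
  by have := geometric_div_Aint (2 ^ k.+1).+1 zA; rewrite exprS zk mulrN1 opprK.
have zk2 : (z ^+ 2) ^+ (2 ^ k) = -1 by rewrite -exprM -expnS.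
have -> : 2 / (1 - z) ^+ (2 ^ k.+1)
          = 2 / (1 - z ^+ 2) ^+ (2 ^ k) * ((1 + z) / (1 - z)) ^+ (2 ^ k).
  have -> : 1 - z ^+ 2 = (1 - z) * (1 + z) by ring.
  rewrite expnS mulnC exprM !expr_div_n exprMn.
  by field; rewrite !expf_neq0.
by rewrite rpredM ?IH ?rpredX.
Qed.

Lemma odd_div_pow2_notAint (q t : nat) :
  odd q -> (0 < t)%N -> q%:R / 2 ^+ t \notin Aint.
Proof.
move=> q_odd t_gt0; apply/negP => qA.
have qQ : q%:R / 2 ^+ t \in Crat by rewrite rpred_div ?rpredX ?rpred_nat.
have : (q%:R / 2 ^+ t : algC) \is a Num.nat.
  by rewrite natrEint (Cint_rat_Aint qQ qA) divr_ge0 ?exprn_ge0 ?ler0n.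
case/natrP => m qE.
have : q = (m * 2 ^ t)%N.
  by apply/eqP; rewrite -(eqr_nat algC) natrM natrX -qE divfK ?expf_neq0 ?pnatr_eq0.
by move=> qmt; move: q_odd; rewrite qmt oddM oddX orbF eqn0Ngt t_gt0 andbF.
Qed.

(* In 2-adic valuations: v(x) <= e1 / P1 and v(y) <= e2 / P2 add up to less than v(2). *)
Lemma half_mul_notAint (x y : algC) (e1 e2 q1 q2 P1 P2 : nat) :
  x != 0 -> y != 0 -> odd q1 -> odd q2 -> (e1 * P2 + e2 * P1 < P1 * P2)%N ->
  (2 ^ e1 * q1)%N%:R / x ^+ P1 \in Aint -> (2 ^ e2 * q2)%N%:R / y ^+ P2 \in Aint ->
  x * y / 2 \notin Aint.
Proof.
move=> x0 y0 q1_odd q2_odd lt_s xA yA; apply/negP => xyA.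
pose t := (P1 * P2 - (e1 * P2 + e2 * P1))%N.
have := rpredM (rpredM (rpredX (P1 * P2) xyA) (rpredX P2 xA)) (rpredX P1 yA).
have -> : (x * y / 2) ^+ (P1 * P2) * ((2 ^ e1 * q1)%N%:R / x ^+ P1) ^+ P2
            * ((2 ^ e2 * q2)%N%:R / y ^+ P2) ^+ P1 = (q1 ^ P2 * q2 ^ P1)%N%:R / 2 ^+ t.
  have two_pow : (2 : algC) ^+ (P1 * P2) = 2 ^+ (e1 * P2) * 2 ^+ (e2 * P1) * 2 ^+ t.
    by rewrite -!exprD /t subnKC // ltnW.
  rewrite !natrM !natrX !expr_div_n !exprMn -!exprM two_pow [(P2 * P1)%N]mulnC.
  by field; rewrite !expf_neq0 ?pnatr_eq0.
apply/negP/odd_div_pow2_notAint; first by rewrite oddM !oddX q1_odd q2_odd !orbT.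
by rewrite subn_gt0.
Qed.

(* With N = 2^e m, m odd: if v^(2^e) = 1 then v^(2^k) = -1 for some k > 0; otherwise
   1 - v divides u := 1 - v^(2^e), and u divides m since u^m = 1. *)
Lemma unity_root_1subr_div_Aint (v : algC) (N : nat) :
  (0 < N)%N -> v ^+ N = 1 -> v != 1 -> v != -1 ->
  exists (b : bool) (q P : nat),
    [/\ odd q, (0 < P)%N, b -> (1 < P)%N /\ v ^+ P = -1
      & (2 ^ b * q)%N%:R / (1 - v) ^+ P \in Aint].
Proof.
move=> N_gt0 vN v_neq1 v_neqN1.
have vA : v \in Aint by apply: (Aint_unity_root N_gt0); rewrite unity_rootE vN.
pose e := logn 2 N; pose m := (N`_2^')%N.
have m_odd : odd m by rewrite odd_2'nat part_pnat.
have [ve1|ve1] := eqVneq (v ^+ (2 ^ e)) 1.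
  have [k vk] := exists_expr2n_eqN1 ve1 v_neq1.
  have k_gt0 : (0 < k)%N.
    by case: k vk => // vk; move: v_neqN1; rewrite -vk expn0 expr1 eqxx.
  exists true, 1%N, (2 ^ k)%N; split; rewrite ?expn_gt0 //.
    by split; rewrite // -{1}(expn0 2) ltn_exp2l.
  by rewrite muln1 two_div_1subr_pow2_Aint.
have vem : (v ^+ (2 ^ e)) ^+ m = 1 by rewrite -exprM -p_part partnC.
exists false, m, 1%N; split => //; rewrite expn0 mul1n expr1.
have -> : m%:R / (1 - v) = m%:R / (1 - v ^+ (2 ^ e)) * ((1 - v ^+ (2 ^ e)) / (1 - v)).
  by rewrite mulrA divfK // subr_eq0 eq_sym.
by rewrite rpredM ?natr_div_1subr_Aint ?rpredX ?geometric_div_Aint.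
Qed.

Lemma half_mul_1subr_notAint (v1 v2 : algC) (N : nat) :
  (0 < N)%N -> v1 ^+ N = 1 -> v2 ^+ N = 1 ->
  v1 != 1 -> v2 != 1 -> v1 != -1 -> v2 != -1 -> ~ (v1 ^+ 2 = -1 /\ v2 ^+ 2 = -1) ->
  (1 - v1) * (1 - v2) / 2 \notin Aint.
Proof.
move=> N_gt0 v1N v2N v1_neq1 v2_neq1 v1_neqN1 v2_neqN1 not_both.
have [b1 [q1 [P1 [q1_odd P1_gt0 b1P1 v1A]]]] :=
  unity_root_1subr_div_Aint N_gt0 v1N v1_neq1 v1_neqN1.
have [b2 [q2 [P2 [q2_odd P2_gt0 b2P2 v2A]]]] :=
  unity_root_1subr_div_Aint N_gt0 v2N v2_neq1 v2_neqN1.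
apply: (half_mul_notAint _ _ q1_odd q2_odd _ v1A v2A); rewrite ?subr_eq0 1?eq_sym //.
case: b1 b1P1 {v1A} => [/(_ erefl) [P1_gt1 v1P]|_];
  case: b2 b2P2 {v2A} => [/(_ erefl) [P2_gt1 v2P]|_] /=; try nia.
have : ~ (P1 = 2 /\ P2 = 2)%N.
  by case=> P12 P22; apply: not_both; split; [rewrite -P12 | rewrite -P22].
nia.
Qed.

Fixpoint chebyshev (R : pzRingType) (x : R) (t : nat) : R :=
  if t is t1.+1 then
    if t1 is t2.+1 then 2 * x * chebyshev x t1 - chebyshev x t2 else x
  else 1.

Lemma chebyshevSS (R : pzRingType) (x : R) (t : nat) :
  chebyshev x t.+2 = 2 * x * chebyshev x t.+1 - chebyshev x t.
Proof. by []. Qed.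

Lemma chebyshev_rec_sol (R : pzRingType) (x : R) (c : nat -> R) :
  c 1%N = x * c 0%N -> (forall t, c t.+2 = 2 * x * c t.+1 - c t) ->
  forall t, c t = chebyshev x t * c 0%N.
Proof.
move=> c1 cSS t.
suff [] : c t = chebyshev x t * c 0%N /\ c t.+1 = chebyshev x t.+1 * c 0%N by [].
elim: t => [|t [IH1 IH2]]; first by rewrite mul1r c1.
by split=> //; rewrite cSS IH1 IH2 chebyshevSS mulrBl !mulrA.
Qed.

Lemma rpred_chebyshev (R : pzRingType) (S : subringClosed R) (x : R) (t : nat) :
  x \in S -> chebyshev x t \in S.
Proof.
move=> xS.
suff [] : chebyshev x t \in S /\ chebyshev x t.+1 \in S by [].
elim: t => [|t [IH1 IH2]]; first by rewrite rpred1.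
by split=> //; rewrite chebyshevSS rpredB ?rpredM ?rpred_nat.
Qed.

Lemma chebyshev_expr (F : fieldType) (x z : F) :
  z != 0 -> 2 * x = z + z^-1 -> forall t, 2 * chebyshev x t = z ^+ t + z ^- t.
Proof.
move=> z0 xz t; rewrite mulrC.
pose c t := z ^+ t + z ^- t.
have c0 : c 0%N = 2 by rewrite /c expr0 invr1.
rewrite -c0 -/(c t); apply: esym; apply: chebyshev_rec_sol => [|s].
  by rewrite c0 /c expr1 mulrC xz.
have zs : z ^+ s != 0 by rewrite expf_neq0.
by rewrite /c xz !exprS; field; rewrite zs.
Qed.

Lemma chebyshev_sqr_eq1_Aint (x : algC) (t : nat) :
  (0 < t)%N -> chebyshev x t ^+ 2 = 1 -> 2 * x \in Aint.
Proof.
(* z := x + sqrt(x^2 - 1) satisfies z + 1/z = 2 x, and T_t(x)^2 = 1 forces z^(2 t) = 1. *)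
move=> t_gt0 Tt.
pose s := sqrtC (x ^+ 2 - 1); pose z := x + s.
have zz' : z * (x - s) = 1.
  by rewrite /z mulrC -subr_sqr sqrtCK opprB addrC subrK.
have z0 : z != 0 by apply: contra_eq_neq zz' => ->; rewrite mul0r eq_sym oner_eq0.
have xz : 2 * x = z + z^-1.
  have zinv : z^-1 = x - s by apply: (mulfI z0); rewrite mulfV.
  by rewrite zinv /z; ring.
have Tz := chebyshev_expr z0 xz t.
set u := z ^+ t in Tz.
have u0 : u != 0 by rewrite expf_neq0.
have u2 : u ^+ 2 = 1.
  have : (u - u^-1) ^+ 2 = 0.
    transitivity ((2 * chebyshev x t) ^+ 2 - 4); last by rewrite exprMn Tt; ring.
    by rewrite Tz; field.
  move/eqP; rewrite expf_eq0 /= subr_eq0 => /eqP uu.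
  by rewrite expr2 {1}uu mulVf.
have z2t : z ^+ (2 * t) = 1 by rewrite mulnC exprM.
have root_Aint w : w ^+ (2 * t) = 1 -> w \in Aint.
  by move=> w1; apply: (@Aint_unity_root (2 * t)); rewrite ?muln_gt0 // unity_rootE w1.
by rewrite xz rpredD ?root_Aint // exprVn z2t invr1.
Qed.

Lemma sum_pred1_mul (R : pzSemiRingType) (T : finType) (c : T) (F : T -> R) :
  \sum_(x : T) (x == c)%:R * F x = F c.
Proof.
under eq_bigr do rewrite mulr_natl mulrb.
by rewrite -big_mkcond big_pred1_eq.
Qed.

Lemma deg_sum (R : pzSemiRingType) (V : finType) (adj : rel V) (x : V) :
  (deg adj x)%:R = \sum_(y : V) (adj x y)%:R :> R.
Proof.
rewrite /deg -sum1_card natr_sum [LHS]big_mkcond /=.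
by apply: eq_bigr => y _; rewrite inE; case: (adj x y).
Qed.

Lemma sum_arc (V : finType) (adj : rel V) (F : V -> V -> algC) :
  \sum_(e : Defs.arc adj) F (val e).1 (val e).2
  = \sum_(w : V) \sum_(y : V) (adj w y)%:R * F w y.
Proof.
have -> : \sum_(w : V) \sum_(y : V) (adj w y)%:R * F w y
          = \sum_(p : V * V | adj p.1 p.2) F p.1 p.2.
  rewrite pair_big [RHS]big_mkcond /=; apply: eq_bigr => -[w y] _ /=.
  by case: (adj w y); rewrite ?mul1r ?mul0r.
rewrite (reindex_omap (val : Defs.arc adj -> V * V) insub); last first.
  by move=> p p_arc; rewrite insubT.
by apply: eq_bigl => -[p p_arc] /=; rewrite p_arc insubT /= eqxx.
Qed.

Section GroverWalk.
Variables (V : finType) (adj : rel V).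
Local Notation arc := (Defs.arc adj).

(* For a k-regular graph, inflow v = sqrt k * (d v) with d the boundary matrix. *)
Definition inflow (v : arc -> algC) (z : V) : algC :=
  \sum_(f : arc) (terminus f == z)%:R * v f.

Definition outflow (v : arc -> algC) (z : V) : algC :=
  \sum_(f : arc) ((val f).1 == z)%:R * v f.

Variable k : nat.
Hypotheses (adj_sym : symmetric adj) (adj_reg : regular adj k) (k_gt0 : (0 < k)%N).
Local Notation sqrtk := (sqrtC (k%:R : algC)).

Lemma sqrtk_neq0 : sqrtk != 0.
Proof. by rewrite sqrtC_eq0 pnatr_eq0 -lt0n. Qed.

Lemma bdryE (x : V) (e : arc) : bdry x e = (x == terminus e)%:R / sqrtk.
Proof. by rewrite /bdry adj_reg mulrC. Qed.

Lemma bdry_adjE (e : arc) (x : V) : bdry_adj e x = (x == terminus e)%:R / sqrtk.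
Proof.
rewrite /bdry_adj bdryE rmorphM fmorphV rmorph_nat /=.
by rewrite geC0_conj // sqrtC_ge0 ler0n.
Qed.

Lemma arc_rev_subproof (e : arc) : adj (val e).2 (val e).1.
Proof. by rewrite adj_sym; exact: valP e. Qed.

Definition arc_rev (e : arc) : arc := Sub ((val e).2, (val e).1) (arc_rev_subproof e).

Lemma val_arc_rev (e : arc) : val (arc_rev e) = ((val e).2, (val e).1).
Proof. by rewrite /arc_rev SubK. Qed.

Lemma arc_revK : involutive arc_rev.
Proof. by move=> e; apply: val_inj; rewrite !val_arc_rev; case: (val e). Qed.

Lemma sum_arc_rev (F : arc -> algC) : \sum_(e : arc) F (arc_rev e) = \sum_(e : arc) F e.
Proof. by rewrite [RHS](reindex_inj (inv_inj arc_revK)). Qed.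

Lemma outdegree (z : V) : \sum_(e : arc) ((val e).1 == z)%:R = k%:R :> algC.
Proof.
rewrite (@sum_arc _ adj (fun w _ => (w == z)%:R)).
under eq_bigr => w _ do rewrite -mulr_suml -deg_sum adj_reg mulrC.
by rewrite sum_pred1_mul.
Qed.

Lemma indegree (z : V) : \sum_(e : arc) (terminus e == z)%:R = k%:R :> algC.
Proof.
by rewrite -(outdegree z) -sum_arc_rev; apply: eq_bigr => e _; rewrite /terminus val_arc_rev.
Qed.

Lemma coinE (g f : arc) :
  coin g f = 2 / k%:R * (terminus f == terminus g)%:R - (f == g)%:R.
Proof.
have div_sqrtk2 p q : p / sqrtk * (q / sqrtk) = p * (q / k%:R).
  by rewrite mulrACA -invfM -expr2 sqrtCK mulrA.
rewrite /coin eq_sym; congr (_ - _).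
under eq_bigr => x _ do rewrite bdry_adjE bdryE div_sqrtk2.
by rewrite sum_pred1_mul eq_sym mulrA mulrAC.
Qed.

Lemma walkUE (e f : arc) :
  walkU e f = 2 / k%:R * (terminus f == (val e).1)%:R - (f == arc_rev e)%:R.
Proof.
rewrite /walkU (eq_bigr (fun g => (g == arc_rev e)%:R * coin g f)) => [|g _].
  by rewrite sum_pred1_mul coinE /terminus val_arc_rev.
rewrite /shift -(inj_eq (inv_inj arc_revK)) arc_revK -val_eqE val_arc_rev.
by rewrite eq_sym.
Qed.

Lemma applyUE (v : arc -> algC) (e : arc) :
  applyU v e = 2 / k%:R * inflow v (val e).1 - v (arc_rev e).
Proof.
rewrite /applyU /inflow mulr_sumr -sum_pred1_mul -sumrB.
by apply: eq_bigr => f _; rewrite walkUE mulrBl mulrA.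
Qed.

Lemma inflow_applyU (v : arc -> algC) (z : V) :
  inflow (applyU v) z
  = 2 / k%:R * \sum_(w : V) (adj w z)%:R * inflow v w - outflow v z.
Proof.
rewrite {1}/inflow; under eq_bigr => e _ do rewrite applyUE mulrBr.
rewrite sumrB; congr (_ - _); last first.
  rewrite -sum_arc_rev /outflow; apply: eq_bigr => e _.
  by rewrite arc_revK /terminus val_arc_rev.
rewrite mulr_sumr (@sum_arc _ adj (fun w y => (y == z)%:R * (2 / k%:R * inflow v w))).
apply: eq_bigr => w _; under eq_bigr => y _ do rewrite mulrCA.
by rewrite sum_pred1_mul mulrCA.
Qed.

Lemma outflow_applyU (v : arc -> algC) (z : V) : outflow (applyU v) z = inflow v z.
Proof.
rewrite /outflow; under eq_bigr => e _ do rewrite applyUE mulrBr.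
rewrite sumrB.
have -> : \sum_(e : arc) ((val e).1 == z)%:R * v (arc_rev e) = inflow v z.
  rewrite -sum_arc_rev /inflow; apply: eq_bigr => e _.
  by rewrite arc_revK val_arc_rev.
have -> : \sum_(e : arc) ((val e).1 == z)%:R * (2 / k%:R * inflow v (val e).1)
          = k%:R * (2 / k%:R * inflow v z).
  rewrite -(outdegree z) mulr_suml; apply: eq_bigr => e _.
  by case: eqP => [->|]; rewrite ?mul0r.
by field; rewrite pnatr_eq0 -lt0n.
Qed.

Lemma inflow_vertex_state (x z : V) :
  inflow (vertex_state x) z = sqrtk * (x == z)%:R.
Proof.
rewrite /inflow /vertex_state.
rewrite (eq_bigr (fun f => (terminus f == z)%:R * ((x == z)%:R / sqrtk))).
  rewrite -mulr_suml indegree -{1}(sqrtCK (k%:R : algC)).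
  by field; rewrite sqrtk_neq0.
by move=> f _; rewrite bdry_adjE; case: eqP => [->|]; rewrite ?mul0r.
Qed.

Lemma outflow_vertex_state (x z : V) :
  outflow (vertex_state x) z = (adj z x)%:R / sqrtk.
Proof.
rewrite /outflow /vertex_state.
under eq_bigr => f _ do rewrite bdry_adjE /terminus.
rewrite (@sum_arc _ adj (fun w y => (w == z)%:R * ((x == y)%:R / sqrtk))).
under eq_bigr => w _ do under eq_bigr => y _ do rewrite mulrCA.
under eq_bigr => w _ do rewrite -mulr_sumr.
rewrite sum_pred1_mul.
under eq_bigr => y _ do rewrite mulrCA eq_sym.
by rewrite sum_pred1_mul.
Qed.

Lemma sum_inflow_iter_applyU (mu : algC) (chi : V -> algC) (x : V) :
  (forall w, \sum_(z : V) (adj w z)%:R * chi z = mu * chi w) ->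
  forall t, \sum_(z : V) inflow (iter t (@applyU _ adj) (vertex_state x)) z * chi z
            = chebyshev (mu / k%:R) t * (sqrtk * chi x).
Proof.
move=> chi_eigen; set s := sqrtk; have s2 : s ^+ 2 = k%:R := sqrtCK _.
have s0 : s != 0 := sqrtk_neq0.
pose c t := \sum_(z : V) inflow (iter t (@applyU _ adj) (vertex_state x)) z * chi z.
have adj_eigen a f : \sum_(z : V) a * (\sum_(w : V) (adj w z)%:R * f w) * chi z
                     = a * mu * \sum_(w : V) f w * chi w.
  under eq_bigr => z _ do rewrite -mulrA mulr_suml mulr_sumr.
  rewrite exchange_big mulr_sumr /=; apply: eq_bigr => w _.
  under eq_bigr => z _ do rewrite mulrA [_ * f w]mulrC -!mulrA.
  by rewrite -!mulr_sumr chi_eigen; ring.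
have c0 : c 0%N = s * chi x.
  rewrite /c; under eq_bigr => z _ do rewrite inflow_vertex_state eq_sym -mulrA.
  by rewrite -mulr_sumr sum_pred1_mul.
have c1 : c 1%N = mu / k%:R * c 0%N.
  have inflow1 z : inflow (applyU (vertex_state x)) z = (adj x z)%:R / s.
    rewrite inflow_applyU outflow_vertex_state -/s adj_sym.
    rewrite (eq_bigr (fun w => (w == x)%:R * (s * (adj w z)%:R))) => [|w _].
      by rewrite sum_pred1_mul -s2; field.
    by rewrite inflow_vertex_state -/s eq_sym; ring.
  rewrite c0 /c /=; under eq_bigr => z _ do rewrite inflow1 mulrAC.
  by rewrite -mulr_suml chi_eigen -s2; field.
have cSS t : c t.+2 = 2 * (mu / k%:R) * c t.+1 - c t.
  rewrite /c; under eq_bigr => z _ do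
    rewrite iterS inflow_applyU iterS outflow_applyU mulrBl.
  by rewrite sumrB adj_eigen -iterS; ring.
by move=> t; rewrite -c0; exact: chebyshev_rec_sol c1 cSS t.
Qed.

Lemma PST_vertex_chebyshev (mu : algC) (chi : V -> algC) :
  (forall w, \sum_(z : V) (adj w z)%:R * chi z = mu * chi w) -> PST_vertex adj ->
  exists x y (tau : nat) (gamma : algC),
    [/\ (0 < tau)%N, `|gamma| = 1 & chebyshev (mu / k%:R) tau * chi x = gamma * chi y].
Proof.
move=> chi_eigen [x [y [tau [gamma [_ tau_gt0 gamma1 pst]]]]].
exists x, y, tau, gamma; split=> //.
have inflow_pst z :
    inflow (iter tau (@applyU _ adj) (vertex_state x)) z = gamma * inflow (vertex_state y) z.
  by rewrite /inflow mulr_sumr; apply: eq_bigr => f _; rewrite pst mulrCA.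
have := sum_inflow_iter_applyU x chi_eigen tau.
under eq_bigr => z _ do rewrite inflow_pst inflow_vertex_state eq_sym.
rewrite (eq_bigr (fun z => (z == y)%:R * (gamma * (sqrtk * chi z)))) => [|z _]; last by ring.
rewrite sum_pred1_mul => E.
by apply: (mulfI sqrtk_neq0); rewrite mulrCA -E mulrCA.
Qed.

End GroverWalk.

Lemma circ_diffE (n : nat) (x y : 'I_n) :
  ((y + n - x) %% n = if x <= y then y - x else y + n - x)%N.
Proof.
have := ltn_ord x; have := ltn_ord y; case: (leqP x y) => [le_xy|lt_yx] ? ?.
  by rewrite -addnBAC // modnDr modn_small //; lia.
by rewrite modn_small //; lia.
Qed.

Lemma circ_adj_sym (n : nat) (S : seq nat) :
  {in S, forall s, (n - s) %% n \in S}%N -> symmetric (circ_adj n S).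
Proof.
move=> S_opp; suff adjC x y : circ_adj n S x y -> circ_adj n S y x.
  by move=> x y; apply/idP/idP; apply: adjC.
rewrite /circ_adj => /S_opp; congr (_ \in S); rewrite !circ_diffE.
have := ltn_ord x; have := ltn_ord y; case: (leqP x y); case: (leqP y x) => *.
- have -> : (y - x = 0)%N by lia.
  by rewrite subn0 modnn; lia.
- by rewrite modn_small; lia.
- by rewrite modn_small; lia.
- lia.
Qed.

Lemma sum_ord_mem (R : pzSemiRingType) (n : nat) (S : seq nat) (F : nat -> R) :
  uniq S -> all (fun s => s < n)%N S ->
  \sum_(i < n) (val i \in S)%:R * F i = \sum_(s <- S) F s.
Proof.
move=> S_uniq S_lt.
rewrite [RHS](perm_big [seq s <- iota 0 n | s \in S]); last first.
  apply: uniq_perm; rewrite ?filter_uniq ?iota_uniq // => s.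
  rewrite mem_filter mem_iota /=.
  by case sS: (s \in S); rewrite //= (allP S_lt).
have -> : iota 0 n = index_iota 0 n by rewrite /index_iota subn0.
rewrite big_filter big_mkord [RHS]big_mkcond /=.
by apply: eq_bigr => i _; rewrite mulr_natl mulrb.
Qed.

Lemma sum_circ_adj (R : pzSemiRingType) (n : nat) (S : seq nat) (x : 'I_n) (F : nat -> R) :
  uniq S -> all (fun s => s < n)%N S ->
  \sum_(z : 'I_n) (circ_adj n S x z)%:R * F ((z + n - x) %% n)%N = \sum_(s <- S) F s.
Proof.
move=> S_uniq S_lt; have n_gt0 : (0 < n)%N by apply: leq_ltn_trans (ltn_ord x).
pose shift (z : 'I_n) : 'I_n := Ordinal (ltn_pmod (z + n - x) n_gt0).
pose unshift (s : 'I_n) : 'I_n := Ordinal (ltn_pmod (s + x) n_gt0).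
have shiftK : cancel shift unshift.
  move=> z; apply: val_inj => /=; rewrite modnDml subnK; last first.
    by rewrite (leq_trans (ltnW (ltn_ord x))) // leq_addl.
  by rewrite modnDr modn_small.
by rewrite -(sum_ord_mem F S_uniq S_lt) [RHS](reindex_inj (can_inj shiftK)).
Qed.

Lemma deg_circ_adj (n : nat) (S : seq nat) (x : 'I_n) :
  all (fun s => s < n)%N S -> deg (circ_adj n S) x = size (undup S).
Proof.
move=> S_lt; rewrite -[deg _ x]natn (deg_sum nat) -sum1_size.
rewrite -(sum_circ_adj x (fun _ => 1%N)) ?undup_uniq ?all_undup //.
by apply: eq_bigr => z _; rewrite /circ_adj mem_undup mulr1.
Qed.

Lemma circ_adj_eigen (n : nat) (S : seq nat) (x : 'I_n) (w : algC) :
  uniq S -> all (fun s => s < n)%N S -> w ^+ n = 1 ->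
  \sum_(z : 'I_n) (circ_adj n S x z)%:R * w ^+ z = (\sum_(s <- S) w ^+ s) * w ^+ x.
Proof.
move=> S_uniq S_lt wn.
have shift_expr (z : 'I_n) : w ^+ z = w ^+ x * w ^+ ((z + n - x) %% n).
  rewrite (expr_mod _ wn) -exprD subnKC; first by rewrite exprD wn mulr1.
  by rewrite (leq_trans (ltnW (ltn_ord x))) // leq_addl.
under eq_bigr => z _ do rewrite shift_expr mulrCA.
by rewrite -mulr_sumr sum_circ_adj // mulrC.
Qed.

Lemma circ_eigen_real (n : nat) (S : seq nat) (w : algC) :
  uniq S -> all (fun s => s < n)%N S -> {in S, forall s, (n - s) %% n \in S}%N ->
  w ^+ n = 1 -> \sum_(s <- S) w ^+ s \is Num.real.
Proof.
move=> S_uniq S_lt S_opp wn; pose opp s := ((n - s) %% n)%N.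
have oppK : {in S, involutive opp}.
  move=> s /(allP S_lt); rewrite /opp.
  case: s => [|s] s_lt; first by rewrite subn0 modnn subn0 modnn.
  by rewrite !modn_small; lia.
have opp_perm : perm_eq (map opp S) S.
  apply: uniq_perm => //; first by rewrite (map_inj_in_uniq (can_in_inj oppK)).
  move=> s; apply/mapP/idP => [[t tS ->]|sS]; first exact: S_opp.
  by exists (opp s); rewrite ?S_opp ?oppK.
apply/CrealP; rewrite rmorph_sum -[in RHS](perm_big _ opp_perm) big_map.
apply: eq_big_seq => s /(allP S_lt) s_lt.
by rewrite /= (conjC_unity_expr _ wn) ?(expr_mod _ wn) //; lia.
Qed.

Lemma circ_PST_chebyshev (n k : nat) (S : seq nat) (w : algC) :
  uniq S -> all (fun s => s < n)%N S -> {in S, forall s, (n - s) %% n \in S}%N ->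
  regular (circ_adj n S) k -> (0 < k)%N -> w ^+ n = 1 -> PST_vertex (circ_adj n S) ->
  exists2 tau, (0 < tau)%N & chebyshev ((\sum_(s <- S) w ^+ s) / k%:R) tau ^+ 2 = 1.
Proof.
move=> S_uniq S_lt S_opp S_reg k_gt0 wn pst.
have [x [y [tau [gamma [tau_gt0 gamma1 pst_xy]]]]] :=
  PST_vertex_chebyshev (circ_adj_sym S_opp) S_reg k_gt0
    (fun x => circ_adj_eigen x S_uniq S_lt wn) pst.
exists tau => //; have n_gt0 : (0 < n)%N by apply: leq_ltn_trans (ltn_ord x).
have T_real : chebyshev ((\sum_(s <- S) w ^+ s) / k%:R) tau \is Num.real.
  by rewrite rpred_chebyshev // rpred_div ?rpred_nat // (circ_eigen_real S_uniq S_lt S_opp wn).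
rewrite -(real_normK T_real); have /(congr1 Num.norm) := pst_xy.
rewrite !normrM !normrX (norm_unity_root n_gt0 wn) gamma1 !expr1n !mulr1 => ->.
exact: expr1n.
Qed.

Lemma dvdn_lt_mul (c d i : nat) :
  (d %| i)%N -> (i < c * d)%N -> exists2 q, (q < c)%N & i = (q * d)%N.
Proof. by move=> /dvdnP[q ->]; rewrite ltn_mul2r => /andP[_ q_lt]; exists q. Qed.

(* For w of order 2 l, so that w^l = -1, these say that v1 := w^(a+b+l) = -w^(a+b) and
   v2 := w^(a+(2l-b)+l) = -w^(a-b) are not +-1 and do not both square to -1. *)
Lemma circ4_exponents (l a b : nat) :
  (1 <= a <= l - 1)%N -> (1 <= b <= l - 1)%N -> a != b -> (a + b != l)%N ->
  [/\ ~~ (2 * l %| a + b + l), ~~ (2 * l %| a + (2 * l - b) + l),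
      ~~ (2 * l %| a + b + l + l), ~~ (2 * l %| a + (2 * l - b) + l + l)
    & ~~ ((2 * l %| (a + b + l) * 2 + l) && (2 * l %| (a + (2 * l - b) + l) * 2 + l))]%N.
Proof.
move=> /andP[a_gt0 a_lt] /andP[b_gt0 b_lt] a_neq_b a_add_b.
split; apply/negP.
- by move/(dvdn_lt_mul (c := 2)) => [|[|[|q]] _]; lia.
- by move/(dvdn_lt_mul (c := 2)) => [|[|[|q]] _]; lia.
- by move/(dvdn_lt_mul (c := 2)) => [|[|[|q]] _]; lia.
- by move/(dvdn_lt_mul (c := 3)) => [|[|[|[|q]]] _]; lia.
move=> /andP[+ d2] => /(dvdn_lt_mul (c := 4)) [|q1 q1_lt E1]; first by clear d2; lia.
move: d2 => /(dvdn_lt_mul (c := 5)) [|q2 q2_lt E2]; first lia.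
case: q1 q1_lt E1 => [|[|[|[|q1]]]] // _ E1;
  by case: q2 q2_lt E2 => [|[|[|[|[|q2]]]]] // _ E2; lia.
Qed.

Lemma circ4_eigen_half_notAint (l a b : nat) (w : algC) :
  (2 * l).-primitive_root w -> (1 <= a <= l - 1)%N -> (1 <= b <= l - 1)%N ->
  a != b -> (a + b != l)%N ->
  (w ^+ a + w ^+ (2 * l - a) + w ^+ b + w ^+ (2 * l - b)) / 2 \notin Aint.
Proof.
move=> w_prim a_bnd b_bnd a_neq_b a_add_b.
have [a_le b_le] : (a <= 2 * l)%N /\ (b <= 2 * l)%N.
  by case/andP: a_bnd => _ ?; case/andP: b_bnd => _ ?; split; lia.
set n := (2 * l)%N in a_le b_le *.
have n_gt0 : (0 < n)%N := prim_order_gt0 w_prim.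
have wn : w ^+ n = 1 := prim_expr_order w_prim.
have wl : w ^+ l = -1 := prim_expr_half w_prim.
have wV i : (i <= n)%N -> w ^+ (n - i) = (w ^+ i)^-1.
  by move=> i_le; apply/esym/mulr1_eq; rewrite -exprD subnKC.
have eq1 i : (w ^+ i == 1) = (n %| i)%N by rewrite (prim_order_dvd w_prim).
have eqN1 i : (w ^+ i == -1) = (n %| i + l)%N.
  by rewrite -eq1 exprD wl mulrN1 eqr_oppLR.
have w_neq0 : w != 0 by have := oner_neq0 algC; rewrite -wn expf_eq0 n_gt0.
pose v1 := w ^+ (a + b + l); pose v2 := w ^+ (a + (n - b) + l).
have factor : (1 - v1) * (1 - v2) / 2
    = w ^+ a * ((w ^+ a + w ^+ (n - a) + w ^+ b + w ^+ (n - b)) / 2).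
  rewrite /v1 /v2 !exprD wl !wV //.
  by field; rewrite !expf_neq0.
apply/negP => muA.
have : (1 - v1) * (1 - v2) / 2 \in Aint.
  by rewrite factor rpredM // rpredX // (Aint_prim_root w_prim).
have [v1_neq1 v2_neq1 v1_neqN1 v2_neqN1 not_both] :=
  circ4_exponents a_bnd b_bnd a_neq_b a_add_b.
apply/negP; apply: (half_mul_1subr_notAint n_gt0).
- by rewrite -exprM mulnC exprM wn expr1n.
- by rewrite -exprM mulnC exprM wn expr1n.
- by rewrite eq1.
- by rewrite eq1.
- by rewrite eqN1.
- by rewrite eqN1.
by rewrite -!exprM => -[/eqP v1N1 /eqP v2N1]; move: not_both; rewrite -!eqN1 v1N1 v2N1.
Qed.

Local Close Scope ring_scope.

Theorem theorem9p19 (l a b : nat) :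
  (2 <= l)%N -> ~~ odd l ->
  (1 <= a <= l - 1)%N -> (1 <= b <= l - 1)%N ->
  connected_graph (circ_adj (2 * l) [:: a; 2 * l - a; b; 2 * l - b]) ->
  regular (circ_adj (2 * l) [:: a; 2 * l - a; b; 2 * l - b]) 4 ->
  (a + b != l)%N ->
  ~ PST_vertex (circ_adj (2 * l) [:: a; 2 * l - a; b; 2 * l - b]).
Proof.
move=> l_ge2 _ a_bnd b_bnd _ reg4 a_add_b pst.
have [[a_ge1 a_le] [b_ge1 b_le]] := (andP a_bnd, andP b_bnd).
have n_gt0 : 0 < 2 * l by lia.
set S := [:: a; 2 * l - a; b; 2 * l - b] in reg4 pst.
have S_lt : all (fun s => s < 2 * l) S by rewrite /S /=; lia.
have a_neq_b : a != b.
  apply/eqP => eq_ab; have := reg4 (Ordinal n_gt0).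
  have b_neq : (b == 2 * l - b) = false by apply/negbTE/eqP; lia.
  by rewrite deg_circ_adj // /S eq_ab /= !inE !eqxx !orbT b_neq.
have S_uniq : uniq S by rewrite /S /= !inE; lia.
have S_opp : {in S, forall s, (2 * l - s) %% (2 * l) \in S}.
  by move=> s; rewrite !inE => /or4P[] /eqP ->; rewrite modn_small; lia.
have [w w_prim] := C_prim_root_exists n_gt0.
have [tau tau_gt0 T_sqr] :=
  circ_PST_chebyshev S_uniq S_lt S_opp reg4 isT (prim_expr_order w_prim) pst.
have half (m : algC) : (2 * (m / 4%:R) = m / 2)%R by field.
have := chebyshev_sqr_eq1_Aint tau_gt0 T_sqr.
rewrite half /S !big_cons big_nil addr0 !addrA.
by apply/negP; apply: circ4_eigen_half_notAint.
Qed.
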